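(* Consider the disclosure model described in the context (emission space $E=[0,\bar e]$, type space $\Theta=[\underline\theta,\bar\theta]$, profit function $\tilde\pi$ satisfying the standing assumptions, and $\pi(\theta,e)=\tilde\pi(\theta,e,e)$). An emission scheme $\mathbf{e}:\Theta\to E$ is implementable if and only if \[\pi(\theta,\mathbf{e}(\theta))\ge \pi(\theta,\mathbf{e}(\theta'))\quad\text{for all }\theta,\theta'\in\Theta,\] and \[\pi(\theta,\mathbf{e}(\theta))\ge \pi(\theta,\bar e)\quad\text{for all }\theta\in\Theta.\]
   Context: Emissions lie in $E=[0,\bar e]\subset\mathbb{R}_+$ with $\bar e>0$. The firm's type $\theta$ lies in $\Theta=[\underline\theta,\bar\theta]\subset\mathbb{R}$ and has a density $f=F'$ that is continuous on $\Theta$. The firm's profit is $\tilde\pi(\theta,e,\tilde e)$, where $e$ is the actual emission and $\tilde e\in E$ the emission perceived by the market. For each $\theta$, $\tilde\pi$ is strictly increasing in $e$ and strictly decreasing in $\tilde e$. Standing assumptions: $\tilde\pi$ is continuous on $\Theta\times E\times E$ and twice continuously differentiable on its interior; $\pi(\theta,e):=\tilde\pi(\theta,e,e)$ is strictly concave in $e$ on $E$ for each $\theta$; and $\pi(\theta,0)<\pi(\theta,\bar e)$ for all $\theta$. A disclosure policy is a function $d:E\to E$; it represents the partition of $E$ into the level sets of $d$, and the market observes $d(e)$. An emission level $e\in E$ is belief-compatible under $d$ if $e\ge e'$ for every $e'\in E$ with $d(e')=d(e)$. Let $\tilde E_d$ denote the set of belief-compatible emission levels. In equilibrium, the market believes that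 the firm chose the highest emission consistent with what is disclosed, so the firm of type $\theta$ effectively solves $\max_{e\in\tilde E_d}\pi(\theta,e)$. Let $\mathcal{D}$ denote the set of disclosure policies $d$ for which this maximum is attained for every $\theta\in\Theta$. An emission scheme $\mathbf{e}:\Theta\to E$ is implementable if there exists $d\in\mathcal{D}$ such that for every $\theta\in\Theta$, $\mathbf{e}(\theta)$ is belief-compatible under $d$ and maximizes $\pi(\theta,\cdot)$ over $\tilde E_d$. *)

From Stdlib Require Import Reals.
Open Scope R_scope.

Definition inE (ebar e : R) : Prop := 0 <= e <= ebar.
Definition inTheta (thl thh th : R) : Prop := thl <= th <= thh.

Definition cont3_on (U : R -> R -> R -> Prop) (g : R -> R -> R -> R) : Prop :=
  forall x y z, U x y z -> forall eps, 0 < eps -> exists delta, 0 < delta /\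
    forall x' y' z', U x' y' z' ->
      Rabs (x' - x) < delta -> Rabs (y' - y) < delta -> Rabs (z' - z) < delta ->
      Rabs (g x' y' z' - g x y z) < eps.

Definition partials3_on (U : R -> R -> R -> Prop) (g g1 g2 g3 : R -> R -> R -> R) : Prop :=
  forall x y z, U x y z ->
    derivable_pt_lim (fun t => g t y z) x (g1 x y z) /\
    derivable_pt_lim (fun t => g x t z) y (g2 x y z) /\
    derivable_pt_lim (fun t => g x y t) z (g3 x y z).

Definition C1_on (U : R -> R -> R -> Prop) (g : R -> R -> R -> R) : Prop :=
  exists g1 g2 g3, partials3_on U g g1 g2 g3 /\
    cont3_on U g1 /\ cont3_on U g2 /\ cont3_on U g3.

Definition C2_on (U : R -> R -> R -> Prop) (g : R -> R -> R -> R) : Prop :=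
  cont3_on U g /\
  exists g1 g2 g3, partials3_on U g g1 g2 g3 /\ C1_on U g1 /\ C1_on U g2 /\ C1_on U g3.

Definition strictly_concave_on (a b : R) (h : R -> R) : Prop :=
  forall x y t, a <= x <= b -> a <= y <= b -> x <> y -> 0 < t < 1 ->
    t * h x + (1 - t) * h y < h (t * x + (1 - t) * y).

Definition derivative_within (a b : R) (F f : R -> R) : Prop :=
  forall x, a <= x <= b -> forall eps, 0 < eps -> exists delta, 0 < delta /\
    forall h, h <> 0 -> a <= x + h <= b -> Rabs h < delta ->
      Rabs ((F (x + h) - F x) / h - f x) < eps.

Definition continuous_within (a b : R) (f : R -> R) : Prop :=
  forall x, a <= x <= b -> forall eps, 0 < eps -> exists delta, 0 < delta /\
    forall y, a <= y <= b -> Rabs (y - x) < delta -> Rabs (f y - f x) < eps.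

Definition standing_assumptions (ebar thl thh : R) (pit : R -> R -> R -> R) : Prop :=
  (* strictly increasing in actual emission e *)
  (forall th et e1 e2, inTheta thl thh th -> inE ebar et -> inE ebar e1 -> inE ebar e2 ->
     e1 < e2 -> pit th e1 et < pit th e2 et) /\
  (* strictly decreasing in perceived emission e~ *)
  (forall th e et1 et2, inTheta thl thh th -> inE ebar e -> inE ebar et1 -> inE ebar et2 ->
     et1 < et2 -> pit th e et2 < pit th e et1) /\
  cont3_on (fun th e et => inTheta thl thh th /\ inE ebar e /\ inE ebar et) pit /\
  C2_on (fun th e et => thl < th < thh /\ 0 < e < ebar /\ 0 < et < ebar) pit /\
  (forall th, inTheta thl thh th -> strictly_concave_on 0 ebar (fun e => pit th e e)) /\
  (forall th, inTheta thl thh th -> pit th 0 0 < pit th ebar ebar).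

Definition pi_ (pit : R -> R -> R -> R) (th e : R) : R := pit th e e.

Definition disclosure_policy (ebar : R) (d : R -> R) : Prop :=
  forall e, inE ebar e -> inE ebar (d e).

Definition belief_compatible (ebar : R) (d : R -> R) (e : R) : Prop :=
  inE ebar e /\ forall e', inE ebar e' -> d e' = d e -> e' <= e.

Definition maximizes_over_bc (ebar : R) (pit : R -> R -> R -> R) (d : R -> R) (th e : R) : Prop :=
  belief_compatible ebar d e /\
  forall e', belief_compatible ebar d e' -> pi_ pit th e' <= pi_ pit th e.

Definition in_D (ebar thl thh : R) (pit : R -> R -> R -> R) (d : R -> R) : Prop :=
  disclosure_policy ebar d /\
  forall th, inTheta thl thh th -> exists e, maximizes_over_bc ebar pit d th e.

Definition implementable (ebar thl thh : R) (pit : R -> R -> R -> R) (ee : R -> R) : Prop :=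
  exists d, in_D ebar thl thh pit d /\
    forall th, inTheta thl thh th -> maximizes_over_bc ebar pit d th (ee th).

(* Whatever the policy, the top emission [ebar] is belief-compatible, so an
   implementing policy makes every [ee th'] and [ebar] available to type [th];
   this gives both conditions.  Conversely, disclose [e] truthfully exactly
   when it lies in the range of the scheme and pool every other emission with
   [ebar]: the belief-compatible set is then the range together with [ebar],
   and the two conditions say precisely that [ee th] is optimal on it. *)

From Stdlib Require Import Reals Lra ClassicalEpsilon.
Open Scope R_scope.

Lemma top_belief_compatible (ebar : R) (d : R -> R) :
  0 <= ebar -> belief_compatible ebar d ebar.
Proof.
  intros Hebar; split.
  - unfold inE; lra.
  - intros e' [_ He'] _; exact He'.
Qed.

Lemma implementable_incentive_compatible (ebar thl thh : R) (pit : R -> R -> R -> R)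
  (ee : R -> R) :
  0 <= ebar -> implementable ebar thl thh pit ee ->
  (forall th th', inTheta thl thh th -> inTheta thl thh th' ->
     pi_ pit th (ee th') <= pi_ pit th (ee th)) /\
  (forall th, inTheta thl thh th -> pi_ pit th ebar <= pi_ pit th (ee th)).
Proof.
  intros Hebar [d [_ Hmax]]; split.
  - intros th th' Hth Hth'.
    exact (proj2 (Hmax th Hth) _ (proj1 (Hmax th' Hth'))).
  - intros th Hth.
    exact (proj2 (Hmax th Hth) _ (top_belief_compatible ebar d Hebar)).
Qed.

Definition disclose_on (ebar : R) (P : R -> Prop) (e : R) : R :=
  if excluded_middle_informative (P e) then e else ebar.

Section DiscloseOn.

Variables (ebar : R) (P : R -> Prop).
Hypothesis Hebar : 0 <= ebar.

Lemma disclose_on_in {e : R} : P e -> disclose_on ebar P e = e.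
Proof.
  unfold disclose_on; destruct (excluded_middle_informative (P e)); tauto.
Qed.

Lemma disclose_on_out {e : R} : ~ P e -> disclose_on ebar P e = ebar.
Proof.
  unfold disclose_on; destruct (excluded_middle_informative (P e)); tauto.
Qed.

Lemma disclose_on_cases (e : R) :
  disclose_on ebar P e = e \/ disclose_on ebar P e = ebar.
Proof.
  unfold disclose_on; destruct (excluded_middle_informative (P e)); auto.
Qed.

Lemma disclose_on_policy : disclosure_policy ebar (disclose_on ebar P).
Proof.
  intros e He; destruct (disclose_on_cases e) as [-> | ->]; [exact He | unfold inE; lra].
Qed.

Lemma disclose_on_belief_compatible (e : R) :
  P e -> inE ebar e -> belief_compatible ebar (disclose_on ebar P) e.
Proof.
  intros HPe He; split; [exact He |].
  intros e' He' Hd; rewrite (disclose_on_in HPe) in Hd.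
  destruct (disclose_on_cases e') as [Q | Q]; rewrite Q in Hd.
  - lra.
  - destruct He'; lra.
Qed.

Lemma belief_compatible_disclose_on {e : R} :
  belief_compatible ebar (disclose_on ebar P) e -> P e \/ e = ebar.
Proof.
  intros [He Hmax].
  destruct (excluded_middle_informative (P e)) as [HPe | HPe]; [now left | right].
  assert (Htop : ebar <= e).
  { apply Hmax; [unfold inE; lra |].
    rewrite (disclose_on_out HPe).
    destruct (disclose_on_cases ebar); assumption. }
  destruct He; lra.
Qed.

End DiscloseOn.

Lemma incentive_compatible_implementable (ebar thl thh : R) (pit : R -> R -> R -> R)
  (ee : R -> R) :
  0 <= ebar ->
  (forall th, inTheta thl thh th -> inE ebar (ee th)) ->
  (forall th th', inTheta thl thh th -> inTheta thl thh th' ->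
     pi_ pit th (ee th') <= pi_ pit th (ee th)) ->
  (forall th, inTheta thl thh th -> pi_ pit th ebar <= pi_ pit th (ee th)) ->
  implementable ebar thl thh pit ee.
Proof.
  intros Hebar Hee Hic Htop.
  set (range := fun e => exists th, inTheta thl thh th /\ ee th = e).
  assert (Hmax : forall th, inTheta thl thh th ->
            maximizes_over_bc ebar pit (disclose_on ebar range) th (ee th)).
  { intros th Hth; split.
    - apply disclose_on_belief_compatible; [now exists th | now apply Hee].
    - intros e' He'.
      destruct (belief_compatible_disclose_on ebar range Hebar He') as [[th' [Hth' <-]] | ->].
      + now apply Hic.
      + now apply Htop. }
  exists (disclose_on ebar range); split; [split |].
  - now apply disclose_on_policy.
  - intros th Hth; exists (ee th); now apply Hmax.
  - exact Hmax.
Qed.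

Theorem lemma1 (ebar thl thh : R) (F f : R -> R) (pit : R -> R -> R -> R) (ee : R -> R)
  (Hebar : 0 < ebar) (Hth : thl < thh)
  (HF : derivative_within thl thh F f) (Hf : continuous_within thl thh f)
  (Hpit : standing_assumptions ebar thl thh pit)
  (Hee : forall th, inTheta thl thh th -> inE ebar (ee th)) :
  implementable ebar thl thh pit ee <->
  ((forall th th', inTheta thl thh th -> inTheta thl thh th' ->
      pi_ pit th (ee th') <= pi_ pit th (ee th)) /\
   (forall th, inTheta thl thh th -> pi_ pit th ebar <= pi_ pit th (ee th))).
Proof.
  split.
  - apply implementable_incentive_compatible; lra.
  - intros [Hic Htop].
    apply incentive_compatible_implementable; auto; lra.
Qed.
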